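(* Let $U$ be a finite ground set partitioned as $\mathcal{P}=\{U_1,\dots,U_N\}$ and let $\vec p,\vec q\in\mathbb{R}^N_{\ge0}$. For any positive integers $\kappa_1\le\kappa_2$, $$\mathcal{M}_{fair}(\mathcal{P},\kappa_1,\lceil\vec p\kappa_1\rceil,\lceil\vec q\kappa_1\rceil)\subseteq\mathcal{M}_{fair}(\mathcal{P},\kappa_2,\lfloor\vec p\kappa_2\rfloor,\lceil\vec q\kappa_2\rceil).$$
   Context: Fairness matroid: $\mathcal{M}_{fair}(\mathcal{P},\kappa,\vec l,\vec u)=\{S\subseteq U: |S\cap U_c|\le u_c\ \forall c\in[N],\ \sum_{c\in[N]}\max\{|S\cap U_c|,l_c\}\le\kappa\}$. For a vector $\vec v$ and scalar $k$, $\vec v k$ denotes componentwise scaling, and $\lceil\cdot\rceil$, $\lfloor\cdot\rfloor$ are applied componentwise. *)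

From HB Require Import structures.
From mathcomp Require Import all_boot all_order all_algebra.
From mathcomp Require Import reals.
Set Implicit Arguments. Unset Strict Implicit. Unset Printing Implicit Defensive.
Import Order.TTheory GRing.Theory Num.Theory.
Local Open Scope ring_scope.

(* The partition P = {U_1,...,U_N} of the finite ground set U is given by the
   map col : U -> 'I_N assigning each element to its block; U_c = block col c. *)
Definition block (U : finType) (N : nat) (col : U -> 'I_N) (c : 'I_N) : {set U} :=
  [set x | col x == c].

Definition Mfair (U : finType) (N : nat) (col : U -> 'I_N) (kappa : nat)
  (l u : 'I_N -> int) : {set {set U}} :=
  [set S : {set U} |
     [forall c : 'I_N, (#|S :&: block col c|%:Z <= u c)%R]
     && ((\sum_(c < N) Num.max (#|S :&: block col c|%:Z) (l c)) <= kappa%:Z)%R].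

Definition ceil_scale (R : realType) (N : nat) (v : 'I_N -> R) (k : nat) : 'I_N -> int :=
  fun c => Num.ceil (v c * k%:R).
Definition floor_scale (R : realType) (N : nat) (v : 'I_N -> R) (k : nat) : 'I_N -> int :=
  fun c => Num.floor (v c * k%:R).

From HB Require Import structures.
From mathcomp Require Import all_boot all_order all_algebra.
From mathcomp Require Import reals.
Set Implicit Arguments. Unset Strict Implicit. Unset Printing Implicit Defensive.
Import Order.TTheory GRing.Theory Num.Theory.
Local Open Scope ring_scope.

(* The upper bounds [⌈q_c κ⌉] only grow with [κ] because [q ≥ 0].  For the
   budget constraint, the lower bounds [⌈p_c κ1⌉] of a nonempty fairness matroid
   fit into [κ1], so [Σ_c p_c ≤ 1].  Replacing [⌈p_c κ1⌉] by [⌊p_c κ2⌋] raises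
   each term [max (|S ∩ U_c|) l_c] by at most [p_c (κ2 - κ1)], hence the total
   by at most [κ2 - κ1]. *)

Lemma Mfair_sum_lower (U : finType) (N : nat) (col : U -> 'I_N) (kappa : nat)
    (l u : 'I_N -> int) (S : {set U}) :
  S \in Mfair col kappa l u -> \sum_(c < N) l c <= kappa%:Z.
Proof.
rewrite inE => /andP[_]; apply: le_trans.
by apply: ler_sum => c _; rewrite le_max lexx orbT.
Qed.

Lemma sum_le1_of_sum_ceil_scale (R : realType) (N : nat) (p : 'I_N -> R)
    (k : nat) :
  (0 < k)%N -> \sum_(c < N) ceil_scale p k c <= k%:Z -> \sum_(c < N) p c <= 1.
Proof.
move=> k_gt0 sum_ceil_le.
have k_gt0R : (0 : R) < k%:R by rewrite ltr0n.
rewrite -(ler_pM2r k_gt0R) mul1r mulr_suml.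
apply: le_trans (_ : \sum_(c < N) (ceil_scale p k c)%:~R <= _).
  by apply: ler_sum => c _; exact: ceil_ge.
by rewrite -rmorph_sum -[k%:R]/(k%:Z%:~R : R) ler_int.
Qed.

Lemma max_floor_le_max_ceil (R : archiRealDomainType) (s : int) (x y : R) :
  x <= y ->
  (Num.max s (Num.floor y))%:~R <= (Num.max s (Num.ceil x))%:~R + (y - x).
Proof.
move=> le_xy; set M := Num.max s (Num.ceil x).
have le_M_Md : M%:~R <= M%:~R + (y - x) by rewrite lerDl subr_ge0.
rewrite maxEle; case: ifP => _.
- apply: le_trans (floor_le y) _; rewrite addrCA lerDl subr_ge0.
  by apply: le_trans (ceil_ge x) _; rewrite ler_int le_max lexx orbT.
- by apply: le_trans le_M_Md; rewrite ler_int le_max lexx.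
Qed.

Theorem lemma5 (R : realType) (U : finType) (N : nat) (col : U -> 'I_N)
  (p q : 'I_N -> R) (hp : forall c, 0 <= p c) (hq : forall c, 0 <= q c)
  (k1 k2 : nat) (hk1 : (0 < k1)%N) (hk12 : (k1 <= k2)%N) :
  Mfair col k1 (ceil_scale p k1) (ceil_scale q k1)
    \subset Mfair col k2 (floor_scale p k2) (ceil_scale q k2).
Proof.
have le_k12 : (k1%:R : R) <= k2%:R by rewrite ler_nat.
apply/subsetP => S S_in.
have sum_p_le1 := sum_le1_of_sum_ceil_scale hk1 (Mfair_sum_lower S_in).
move: S_in; rewrite !inE => /andP[/forallP S_upper S_budget]; apply/andP; split.
  apply/forallP => c; apply: le_trans (S_upper c) _.
  by apply: le_ceil; rewrite ler_wpM2l ?hq.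
rewrite -(ler_int R) rmorph_sum /=.
apply: le_trans.
  apply: ler_sum => c _; exact: max_floor_le_max_ceil (ler_wpM2l (hp c) le_k12).
rewrite big_split /= -rmorph_sum.
have -> : \sum_(c < N) (p c * k2%:R - p c * k1%:R)
          = (\sum_(c < N) p c) * (k2%:R - k1%:R).
  by rewrite mulr_suml; apply: eq_bigr => c _; rewrite mulrBr.
apply: le_trans (_ : k1%:R + (k2%:R - k1%:R) <= _).
  apply: lerD; first by rewrite -[k1%:R]/(k1%:Z%:~R : R) ler_int.
  by rewrite ler_piMl // subr_ge0.
by rewrite -[k2%:~R]/(k2%:R : R) addrC subrK lexx.
Qed.
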